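(* Let $a\in[0,1/2]$, $\epsilon>0$ and $\mathcal O=[a-\epsilon,a+\epsilon]\cap[0,1/2]$. There exist $\eta>0$ and $N\in\mathbb N^*$ such that $$\inf_{z\in[0,1/2]}\mathbb P_z[Z_N\in\mathcal O]\ge\eta,$$ where under $\mathbb P_z$, $(Z_n)_{n\in\mathbb N}$ is a Markov chain with transition kernel $M$ and $Z_0=z$.
   Context: $M$ is the Markov kernel $M(x,\cdot)=\frac16\sum_{i=1}^6\delta_{z_i(x)}$ on $[0,1/2]$, where for $x\in[0,1/2]$: $z_1(x)=\frac{3x}{2+2x}$; $z_2(x)=\frac{3x}{2-x}$ if $x<2/7$ and $\frac{2-4x}{2-x}$ if $x\ge2/7$; $z_3(x)=\frac{1+x}{3-3x}$ if $x<1/5$ and $\frac{2-4x}{3-3x}$ if $x\ge1/5$; $z_4(x)=\frac{1+x}{4-2x}$; $z_5(x)=\frac{1-2x}{4-2x}$; $z_6(x)=\frac{1-2x}{3}$. *)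

From Stdlib Require Import Reals ClassicalEpsilon.
Open Scope R_scope.

Definition z1 (x : R) : R := 3 * x / (2 + 2 * x).
Definition z2 (x : R) : R :=
  if Rlt_dec x (2/7) then 3 * x / (2 - x) else (2 - 4 * x) / (2 - x).
Definition z3 (x : R) : R :=
  if Rlt_dec x (1/5) then (1 + x) / (3 - 3 * x) else (2 - 4 * x) / (3 - 3 * x).
Definition z4 (x : R) : R := (1 + x) / (4 - 2 * x).
Definition z5 (x : R) : R := (1 - 2 * x) / (4 - 2 * x).
Definition z6 (x : R) : R := (1 - 2 * x) / 3.

Definition indic (A : R -> Prop) (x : R) : R :=
  if excluded_middle_informative (A x) then 1 else 0.

(* chain_prob n z A = P_z[Z_n \in A] for the Markov chain (Z_n) with kernel
   M(x,.) = (1/6) sum_{i=1}^6 delta_{z_i(x)} started at Z_0 = z, computed by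
   the first-step (Chapman-Kolmogorov) recursion
   P_z[Z_{n+1} \in A] = sum_y M(z,{y}) P_y[Z_n \in A]. *)
Fixpoint chain_prob (n : nat) (z : R) (A : R -> Prop) : R :=
  match n with
  | O => indic A z
  | S m => / 6 * (chain_prob m (z1 z) A + chain_prob m (z2 z) A
                 + chain_prob m (z3 z) A + chain_prob m (z4 z) A
                 + chain_prob m (z5 z) A + chain_prob m (z6 z) A)
  end.

(* The branches z4 and z5 map [0,1/2] into itself, are
   2/3-Lipschitz there, and together cover [0,1/2]: z4 is onto [1/4,1/2] and z5
   onto [0,1/4].  Taking a preimage b of a under one of them as a new target, an
   n-step visit to the r-neighbourhood of b followed by that branch (probability
   1/6) is an (n+1)-step visit to the (2/3) r-neighbourhood of a.  By induction,
   every point reaches the (2/3)^n/2-neighbourhood of a in n steps with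
   probability at least 6^-n, and (2/3)^N/2 <= eps for N large. *)
From Stdlib Require Import Reals Lra Lia ClassicalEpsilon.
Open Scope R_scope.

Definition step_mean (g : R -> R) (z : R) : R :=
  / 6 * (g (z1 z) + g (z2 z) + g (z3 z) + g (z4 z) + g (z5 z) + g (z6 z)).

Definition near (a r x : R) : Prop := (a - r <= x <= a + r) /\ (0 <= x <= 1/2).

Lemma chain_prob_S n z A :
  chain_prob (S n) z A = step_mean (fun y => chain_prob n y A) z.
Proof. reflexivity. Qed.

Lemma step_mean_le g h z :
  (forall y, g y <= h y) -> step_mean g z <= step_mean h z.
Proof.
  intros Hgh; unfold step_mean.
  pose proof (Hgh (z1 z)); pose proof (Hgh (z2 z)); pose proof (Hgh (z3 z));
  pose proof (Hgh (z4 z)); pose proof (Hgh (z5 z)); pose proof (Hgh (z6 z)).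
  lra.
Qed.

Lemma step_mean_scal c g z :
  step_mean (fun y => c * g y) z = c * step_mean g z.
Proof. unfold step_mean; ring. Qed.

Lemma indic_bounds A x : 0 <= indic A x <= 1.
Proof. unfold indic; destruct excluded_middle_informative; lra. Qed.

Lemma chain_prob_mono n z (A B : R -> Prop) :
  (forall x, A x -> B x) -> chain_prob n z A <= chain_prob n z B.
Proof.
  intros HAB; revert z; induction n as [|n IH]; intros z.
  - unfold chain_prob, indic.
    destruct excluded_middle_informative as [HA|];
      destruct excluded_middle_informative as [|HB]; try lra.
    exfalso; now apply HB, HAB.
  - rewrite !chain_prob_S; now apply step_mean_le.
Qed.

Section LastStep.

Variable f : R -> R.
Hypothesis step_mean_ge_branch :
  forall g z, (forall y, 0 <= g y) -> / 6 * g (f z) <= step_mean g z.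

Lemma chain_prob_last_step n z A :
  / 6 * chain_prob n z (fun y => A (f y)) <= chain_prob (S n) z A.
Proof.
  revert z; induction n as [|n IH]; intros z.
  - apply (step_mean_ge_branch (indic A)); intros y; apply indic_bounds.
  - rewrite (chain_prob_S (S n)), chain_prob_S, <- step_mean_scal.
    now apply step_mean_le.
Qed.

End LastStep.

Lemma step_mean_ge_z4 g z :
  (forall y, 0 <= g y) -> / 6 * g (z4 z) <= step_mean g z.
Proof.
  intros Hg; unfold step_mean.
  pose proof (Hg (z1 z)); pose proof (Hg (z2 z)); pose proof (Hg (z3 z));
  pose proof (Hg (z5 z)); pose proof (Hg (z6 z)).
  lra.
Qed.

Lemma step_mean_ge_z5 g z :
  (forall y, 0 <= g y) -> / 6 * g (z5 z) <= step_mean g z.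
Proof.
  intros Hg; unfold step_mean.
  pose proof (Hg (z1 z)); pose proof (Hg (z2 z)); pose proof (Hg (z3 z));
  pose proof (Hg (z4 z)); pose proof (Hg (z6 z)).
  lra.
Qed.

Lemma div_between_0_half p q : 0 < q -> 0 <= p -> 2 * p <= q -> 0 <= p / q <= 1/2.
Proof.
  intros Hq Hp Hpq.
  assert (Hiq : 0 < / q) by now apply Rinv_0_lt_compat.
  assert (E : p / q * q = p) by (field; lra).
  split; nra.
Qed.

Lemma z4_maps_half y : 0 <= y <= 1/2 -> 0 <= z4 y <= 1/2.
Proof. intros Hy; unfold z4; apply div_between_0_half; lra. Qed.

Lemma z5_maps_half y : 0 <= y <= 1/2 -> 0 <= z5 y <= 1/2.
Proof. intros Hy; unfold z5; apply div_between_0_half; lra. Qed.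

(* The derivative of (c + d y)/(4 - 2y) is (2c + 4d)/(4 - 2y)^2, and 4 - 2y >= 3
   on [0,1/2]. *)
Lemma frac_4_2_lipschitz c d y b :
  0 <= y <= 1/2 -> 0 <= b <= 1/2 -> Rabs (2 * c + 4 * d) = 6 ->
  Rabs ((c + d * y) / (4 - 2 * y) - (c + d * b) / (4 - 2 * b)) <= 2/3 * Rabs (y - b).
Proof.
  intros Hy Hb Hcd.
  set (D := (4 - 2 * y) * (4 - 2 * b)).
  assert (HD : 9 <= D) by (unfold D; nra).
  replace ((c + d * y) / (4 - 2 * y) - (c + d * b) / (4 - 2 * b))
    with ((2 * c + 4 * d) * (y - b) / D) by (unfold D; field; lra).
  unfold Rdiv; rewrite !Rabs_mult, Hcd, (Rabs_pos_eq (/ D)).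
  2: { left; apply Rinv_0_lt_compat; lra. }
  assert (HiD : / D <= / 9) by (apply Rinv_le_contravar; lra).
  pose proof (Rabs_pos (y - b)).
  nra.
Qed.

Lemma z4_lipschitz y b :
  0 <= y <= 1/2 -> 0 <= b <= 1/2 -> Rabs (z4 y - z4 b) <= 2/3 * Rabs (y - b).
Proof.
  intros Hy Hb; unfold z4.
  replace (1 + y) with (1 + 1 * y) by ring; replace (1 + b) with (1 + 1 * b) by ring.
  apply frac_4_2_lipschitz; auto.
  rewrite Rabs_pos_eq; lra.
Qed.

Lemma z5_lipschitz y b :
  0 <= y <= 1/2 -> 0 <= b <= 1/2 -> Rabs (z5 y - z5 b) <= 2/3 * Rabs (y - b).
Proof.
  intros Hy Hb; unfold z5.
  replace (1 - 2 * y) with (1 + -2 * y) by ring;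
  replace (1 - 2 * b) with (1 + -2 * b) by ring.
  apply frac_4_2_lipschitz; auto.
  rewrite Rabs_left; lra.
Qed.

Lemma z4_z5_onto_half a :
  0 <= a <= 1/2 -> exists b, 0 <= b <= 1/2 /\ (z4 b = a \/ z5 b = a).
Proof.
  intros Ha; destruct (Rle_lt_dec (1/4) a) as [Hle|Hlt].
  - exists ((4 * a - 1) / (1 + 2 * a)); split.
    + apply div_between_0_half; lra.
    + left; unfold z4; field; lra.
  - exists ((1 - 4 * a) / (2 - 2 * a)); split.
    + apply div_between_0_half; lra.
    + right; unfold z5; field; lra.
Qed.

Section ContractingBranch.

Variable f : R -> R.
Hypothesis step_mean_ge_f :
  forall g z, (forall y, 0 <= g y) -> / 6 * g (f z) <= step_mean g z.
Hypothesis f_maps_half : forall y, 0 <= y <= 1/2 -> 0 <= f y <= 1/2.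
Hypothesis f_lipschitz : forall y b, 0 <= y <= 1/2 -> 0 <= b <= 1/2 ->
  Rabs (f y - f b) <= 2/3 * Rabs (y - b).

Lemma chain_prob_near_branch n z b r : 0 <= b <= 1/2 ->
  / 6 * chain_prob n z (near b r) <= chain_prob (S n) z (near (f b) (2/3 * r)).
Proof.
  intros Hb.
  eapply Rle_trans; [|apply chain_prob_last_step; exact step_mean_ge_f].
  apply Rmult_le_compat_l; [lra|].
  apply chain_prob_mono; intros y [Hyb Hy]; split; [|now apply f_maps_half].
  assert (Hr : Rabs (y - b) <= r) by (apply Rabs_le; lra).
  pose proof (f_lipschitz y b Hy Hb) as Hf.
  pose proof (Rle_abs (f y - f b)); pose proof (Rle_abs (- (f y - f b))).
  rewrite Rabs_Ropp in *; lra.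
Qed.

End ContractingBranch.

Lemma chain_prob_near_lower_bound n a z : 0 <= a <= 1/2 -> 0 <= z <= 1/2 ->
  (/ 6) ^ n <= chain_prob n z (near a ((2/3) ^ n / 2)).
Proof.
  revert a; induction n as [|n IH]; intros a Ha Hz.
  - unfold chain_prob, indic; simpl.
    destruct excluded_middle_informative as [|Hnear]; [lra|].
    exfalso; apply Hnear; split; lra.
  - replace ((2/3) ^ S n / 2) with (2/3 * ((2/3) ^ n / 2)) by (simpl; field).
    simpl pow.
    destruct (z4_z5_onto_half a Ha) as [b [Hb Hab]].
    pose proof (IH b Hb Hz) as IHb.
    destruct Hab as [<- | <-].
    + eapply Rle_trans;
        [|apply (chain_prob_near_branch z4 step_mean_ge_z4 z4_maps_half z4_lipschitz), Hb].
      apply Rmult_le_compat_l; lra.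
    + eapply Rle_trans;
        [|apply (chain_prob_near_branch z5 step_mean_ge_z5 z5_maps_half z5_lipschitz), Hb].
      apply Rmult_le_compat_l; lra.
Qed.

Theorem lemma20 (a eps : R) :
  0 <= a <= 1/2 -> 0 < eps ->
  exists eta : R, 0 < eta /\
  exists N : nat, (1 <= N)%nat /\
    forall z : R, 0 <= z <= 1/2 ->
      eta <= chain_prob N z
               (fun x => (a - eps <= x <= a + eps) /\ (0 <= x <= 1/2)).
Proof.
  intros Ha Heps.
  assert (Hq : Rabs (2/3) < 1) by (rewrite Rabs_pos_eq; lra).
  destruct (pow_lt_1_zero (2/3) Hq eps Heps) as [N0 HN0].
  set (N := S N0).
  assert (Hsmall : (2/3) ^ N / 2 <= eps).
  { specialize (HN0 N ltac:(unfold N; lia)).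
    rewrite Rabs_pos_eq in HN0 by (apply pow_le; lra).
    pose proof (pow_le (2/3) N ltac:(lra)); lra. }
  exists ((/ 6) ^ N); split; [apply pow_lt; lra|].
  exists N; split; [unfold N; lia|].
  intros z Hz.
  eapply Rle_trans; [now apply (chain_prob_near_lower_bound N a z)|].
  apply chain_prob_mono; intros x [Hx Hhalf]; split; [lra|exact Hhalf].
Qed.
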